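(* Let $A,B$ be monoids, $p:A\to B$ and $j:B\to A$ monoid homomorphisms with $p\circ j=\mathrm{id}_B$, and suppose $(A,B,p,j)$ is a Schreier split epimorphism: for every $a\in A$ there is a unique $k\in \mathrm{Ker}(p)$ with $a=k\cdot j(p(a))$. Let $\kappa:\mathrm{Ker}(p)\to A$ be the inclusion and let $q:A\to\mathrm{Ker}(p)$ send $a$ to this unique $k$. Then $q$ satisfies, with respect to $\kappa$, the conditions (ZL1) $q(1_A)=1$; (ZL2) $q(\kappa(x)a)=x\,q(a)$ for all $x\in\mathrm{Ker}(p)$, $a\in A$; (ZL3) $q(aa')=q(a\cdot\kappa(q(a')))$ for all $a,a'\in A$; equivalently, $q$ defines a $\mathsf T^l_\kappa$-algebra structure on the left $\mathrm{Ker}(p)$-set $\mathrm{Ker}(p)$. Moreover $q\circ\kappa=\mathrm{id}_{\mathrm{Ker}(p)}$.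
   Context: $\mathrm{Ker}(p)=\{a\in A: p(a)=1_B\}$, a submonoid of $A$. For a monoid homomorphism $\iota:B'\to A$, $\mathsf T^l_\iota$ is the monad $X\mapsto A\otimes_{B'}X$ on left $B'$-sets induced by extension/restriction of scalars; its algebra structures on the left $B'$-set $B'$ correspond bijectively to maps $A\to B'$ satisfying (ZL1)–(ZL3) relative to $\iota$. *)

From Stdlib Require Import ProofIrrelevance.
Set Implicit Arguments.

Record monoid := Monoid {
  carrier :> Type;
  mop : carrier -> carrier -> carrier;
  mone : carrier;
  mopA : forall x y z, mop x (mop y z) = mop (mop x y) z;
  mop1l : forall x, mop mone x = x;
  mop1r : forall x, mop x mone = x
}.
Arguments mop {m}.
Arguments mone {m}.

Record hom (A B : monoid) := Hom {
  hfun :> A -> B;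
  hom_mul : forall x y, hfun (mop x y) = mop (hfun x) (hfun y);
  hom_one : hfun mone = mone
}.

Section Kernel.
Variables (A B : monoid) (p : hom A B).

Definition Ker := { a : A | p a = mone }.

Lemma Ker_mul_proof (x y : Ker) : p (mop (proj1_sig x) (proj1_sig y)) = mone.
Proof. destruct x as [x hx], y as [y hy]; simpl.
  rewrite hom_mul, hx, hy; apply mop1l. Qed.

Lemma Ker_one_proof : p mone = mone.
Proof. apply hom_one. Qed.

Definition Ker_mul (x y : Ker) : Ker := exist _ _ (Ker_mul_proof x y).
Definition Ker_one : Ker := exist _ _ Ker_one_proof.

Lemma Ker_eq (x y : Ker) : proj1_sig x = proj1_sig y -> x = y.
Proof. destruct x, y; simpl; intros ->; f_equal; apply proof_irrelevance. Qed.

Lemma Ker_mulA x y z : Ker_mul x (Ker_mul y z) = Ker_mul (Ker_mul x y) z.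
Proof. apply Ker_eq; simpl; apply mopA. Qed.
Lemma Ker_mul1l x : Ker_mul Ker_one x = x.
Proof. apply Ker_eq; simpl; apply mop1l. Qed.
Lemma Ker_mul1r x : Ker_mul x Ker_one = x.
Proof. apply Ker_eq; simpl; apply mop1r. Qed.

Definition KerM : monoid := Monoid Ker_mul Ker_one Ker_mulA Ker_mul1l Ker_mul1r.

Definition kappa : hom KerM A :=
  @Hom KerM A (fun x : Ker => proj1_sig x) (fun _ _ => eq_refl) eq_refl.
End Kernel.

Definition schreier_split_epi (A B : monoid) (p : hom A B) (j : hom B A) : Prop :=
  (forall b, p (j b) = b) /\
  (forall a : A, exists! k : Ker p, a = mop (proj1_sig k) (j (p a))).

Definition ZL (B' A : monoid) (iota : hom B' A) (q : A -> B') : Prop :=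
  q mone = mone /\
  (forall (x : B') (a : A), q (mop (iota x) a) = mop x (q a)) /\
  (forall a a' : A, q (mop a a') = q (mop a (iota (q a')))).

Set Implicit Arguments.
Unset Strict Implicit.

(* Each ZL condition says that two elements of Ker(p) coincide; both are
   shown to be the kernel component of the same element of A, so uniqueness
   of the Schreier decomposition identifies them. *)

Lemma Ker_val_p (A B : monoid) (p : hom A B) (k : Ker p) : p (proj1_sig k) = mone.
Proof. exact (proj2_sig k). Qed.

Lemma hom_mul_Ker_r (A B : monoid) (p : hom A B) (a : A) (k : Ker p) :
  p (mop a (proj1_sig k)) = p a.
Proof. rewrite hom_mul, Ker_val_p; apply mop1r. Qed.

Lemma hom_mul_Ker_l (A B : monoid) (p : hom A B) (k : Ker p) (a : A) :
  p (mop (proj1_sig k) a) = p a.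
Proof. rewrite hom_mul, Ker_val_p; apply mop1l. Qed.

Section SchreierRetraction.

Variables (A B : monoid) (p : hom A B) (j : hom B A).
Hypothesis decomp_unique :
  forall a : A, exists! k : Ker p, a = mop (proj1_sig k) (j (p a)).
Variable q : A -> KerM p.
Hypothesis q_decomp : forall a : A, a = mop (proj1_sig (q a)) (j (p a)).

Lemma q_unique (a : A) (k : Ker p) : a = mop (proj1_sig k) (j (p a)) -> q a = k.
Proof.
  intros Hk. destruct (decomp_unique a) as [k0 [_ Hk0]].
  transitivity k0; [symmetry |]; apply Hk0; auto.
Qed.

Lemma q_kappa (x : KerM p) : q (kappa p x) = x.
Proof.
  apply q_unique; simpl.
  rewrite Ker_val_p, hom_one, mop1r; reflexivity.
Qed.

Lemma q_one : q mone = mone.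
Proof. exact (q_kappa (Ker_one p)). Qed.

Lemma q_kappa_mul (x : KerM p) (a : A) : q (mop (kappa p x) a) = mop x (q a).
Proof.
  apply q_unique; simpl.
  rewrite hom_mul_Ker_l, <- mopA, <- q_decomp; reflexivity.
Qed.

Lemma q_mul (a a' : A) : q (mop a a') = q (mop a (kappa p (q a'))).
Proof.
  apply q_unique; simpl.
  set (y := mop a (proj1_sig (q a'))).
  assert (py : p y = p a) by apply hom_mul_Ker_r.
  rewrite hom_mul, hom_mul, mopA, <- py, <- (q_decomp y).
  unfold y; rewrite <- mopA, <- q_decomp; reflexivity.
Qed.

End SchreierRetraction.

Theorem proposition3p8 (A B : monoid) (p : hom A B) (j : hom B A)
  (hS : schreier_split_epi p j)
  (q : A -> KerM p)
  (hq : forall a : A, a = mop (proj1_sig (q a)) (j (p a))) :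
  ZL (kappa p) q /\ (forall x : KerM p, q (kappa p x) = x).
Proof.
  (* only uniqueness of the decomposition is used, not p \o j = id *)
  destruct hS as [_ hU].
  split; [split; [| split] |].
  - exact (q_one hU hq).
  - exact (q_kappa_mul hU hq).
  - exact (q_mul hU hq).
  - exact (q_kappa hU hq).
Qed.
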